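(* Let $G\in\mathrm{C}^2(\mathbb{R})$ be coercive and $p_1<p_2$ with $G'(p_1)<0<G'(p_2)$, and let $L=\frac{G'(p_2)}{G'(p_2)-G'(p_1)}\in(0,1)$. For any $\ell\in(0,\min\{L,1-L\})$ there is $f\in\mathcal{C}(L,\ell)$ such that $\int_0^1 G'(f(x))\,dx=0$.
   Context: $G$ coercive means $G(p)\to\infty$ as $p\to\pm\infty$. $\mathrm{C}^{1,1}(\mathbb{R})$ is the set of $f\in\mathrm{C}^1(\mathbb{R})$ with $f'$ Lipschitz. $\mathcal{C}(L,\ell)$ is the set of $1$-periodic $f\in\mathrm{C}^{1,1}(\mathbb{R})$ with $p_1\le f(x)\le p_2$ for all $x$, $f(x)=p_1$ for $x\in[0,L-\ell]$, and $f(x)=p_2$ for $x\in[L,1-\ell]$. *)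

From Stdlib Require Import Reals.
From Coquelicot Require Import Coquelicot.
Open Scope R_scope.

Definition C1 (f : R -> R) : Prop :=
  forall x, ex_derive f x /\ continuous (Derive f) x.

Definition C2 (f : R -> R) : Prop := C1 f /\ C1 (Derive f).

Definition C11 (f : R -> R) : Prop :=
  C1 f /\ exists K : R, forall x y, Rabs (Derive f x - Derive f y) <= K * Rabs (x - y).

Definition coercive (G : R -> R) : Prop :=
  filterlim G (Rbar_locally p_infty) (Rbar_locally p_infty) /\
  filterlim G (Rbar_locally m_infty) (Rbar_locally p_infty).

Definition classC (p1 p2 L l : R) (f : R -> R) : Prop :=
  (forall x, f (x + 1) = f x) /\
  C11 f /\
  (forall x, p1 <= f x <= p2) /\
  (forall x, 0 <= x <= L - l -> f x = p1) /\
  (forall x, L <= x <= 1 - l -> f x = p2).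

(* On [0, 1], f equals p1 except for a rise to p2 inside [L - l, L] and a fall back
   to p1 inside [1 - l, 1], each a copy of the C^{1,1} cubic smoothstep rescaled to
   width d; f is then extended 1-periodically.  Over one period,
     int G'(f) = G'(p1) (1 - w) + G'(p2) w + d D,
   where w is the distance between the two transitions and D depends only on G', p1
   and p2, not on where the transitions sit.  Since G'(p1) L + G'(p2) (1 - L) = 0 and
   G'(p1) < 0 < G'(p2), the choice w = 1 - L - d D / (G'(p2) - G'(p1)) makes the
   integral vanish, and for d small enough both transitions still fit in the windows
   of width l allowed by C(L, l). *)

From Stdlib Require Import Reals Lra.
From Coquelicot Require Import Coquelicot.
Open Scope R_scope.

Lemma lipschitz_continuous (g : R -> R) (K : R) :
  (forall x y, Rabs (g x - g y) <= K * Rabs (x - y)) -> forall x, continuous g x.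
Proof.
  intros g_lip x. apply continuity_pt_filterlim. intros eps eps_pos.
  assert (K_pos : 0 < Rabs K + 1) by (pose proof (Rabs_pos K); lra).
  exists (eps / (Rabs K + 1)). split; [apply Rdiv_lt_0_compat; lra |].
  intros y [_ y_near]. simpl in *. unfold Rdist in *.
  apply Rle_lt_trans with (Rabs K * Rabs (y - x)).
  - eapply Rle_trans; [apply g_lip |].
    apply Rmult_le_compat_r; [apply Rabs_pos | apply RRle_abs].
  - apply Rlt_div_r in y_near; [| lra].
    pose proof (Rabs_pos K). pose proof (Rabs_pos (y - x)). nra.
Qed.

Definition clamp01 (u : R) : R := Rmax 0 (Rmin 1 u).

Ltac clamp01_cases := unfold clamp01, Rmax, Rmin; repeat destruct Rle_dec.

Lemma clamp01_bounds u : 0 <= clamp01 u <= 1.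
Proof. clamp01_cases; lra. Qed.

Lemma clamp01_id u : 0 <= u <= 1 -> clamp01 u = u.
Proof. clamp01_cases; lra. Qed.

Lemma clamp01_le0 u : u <= 0 -> clamp01 u = 0.
Proof. clamp01_cases; lra. Qed.

Lemma clamp01_ge1 u : 1 <= u -> clamp01 u = 1.
Proof. clamp01_cases; lra. Qed.

Lemma clamp01_le u v : u <= v -> clamp01 u <= clamp01 v.
Proof. clamp01_cases; lra. Qed.

Lemma clamp01_lipschitz u v : Rabs (clamp01 u - clamp01 v) <= Rabs (u - v).
Proof. clamp01_cases; split_Rabs; lra. Qed.

Definition cubic_step (v : R) : R := v * v * (3 - 2 * v).
Definition smoothstep (u : R) : R := cubic_step (clamp01 u).
Definition smoothstep' (u : R) : R := 6 * clamp01 u * (1 - clamp01 u).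

Lemma smoothstep'_bounds u : 0 <= smoothstep' u <= 2.
Proof. unfold smoothstep'. pose proof (clamp01_bounds u). nra. Qed.

Lemma smoothstep'_lipschitz u v :
  Rabs (smoothstep' u - smoothstep' v) <= 6 * Rabs (u - v).
Proof.
  unfold smoothstep'. pose proof (clamp01_lipschitz u v).
  pose proof (clamp01_bounds u). pose proof (clamp01_bounds v).
  set (x := clamp01 u) in *. set (y := clamp01 v) in *.
  replace (6 * x * (1 - x) - 6 * y * (1 - y)) with (6 * ((x - y) * (1 - x - y))) by ring.
  rewrite !Rabs_mult, (Rabs_right 6) by lra.
  assert (Rabs (1 - x - y) <= 1) by (split_Rabs; lra).
  pose proof (Rabs_pos (x - y)). pose proof (Rabs_pos (1 - x - y)). nra.
Qed.

Lemma smoothstep'_continuous u : continuous smoothstep' u.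
Proof. exact (lipschitz_continuous _ 6 smoothstep'_lipschitz u). Qed.

Lemma ex_RInt_smoothstep' a b : ex_RInt smoothstep' a b.
Proof. apply (ex_RInt_continuous smoothstep'). intros; apply smoothstep'_continuous. Qed.

Lemma smoothstep'_le0 u : u <= 0 -> smoothstep' u = 0.
Proof. intros; unfold smoothstep'; rewrite clamp01_le0; lra. Qed.

Lemma smoothstep'_ge1 u : 1 <= u -> smoothstep' u = 0.
Proof. intros; unfold smoothstep'; rewrite clamp01_ge1; lra. Qed.

Lemma RInt_zero_ext (f : R -> R) a b :
  (forall x, Rmin a b < x < Rmax a b -> f x = 0) -> RInt f a b = 0.
Proof. intros f0. rewrite (RInt_ext _ _ _ _ f0), RInt_const. apply Rmult_0_r. Qed.

(* Going through the integral of smoothstep' gives differentiability at the kinks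
   u = 0 and u = 1 without any one-sided analysis. *)
Lemma smoothstep_RInt u : smoothstep u = RInt smoothstep' 0 u.
Proof.
  assert (on_unit : forall v, 0 <= v <= 1 -> RInt smoothstep' 0 v = cubic_step v).
  { intros v v01. apply is_RInt_unique.
    replace (cubic_step v) with (minus (cubic_step v) (cubic_step 0))
      by (unfold cubic_step, minus, plus, opp; simpl; ring).
    apply (is_RInt_derive cubic_step); [| intros; apply smoothstep'_continuous].
    intros x x01. rewrite Rmin_left, Rmax_right in x01 by lra.
    unfold smoothstep'. rewrite clamp01_id by lra.
    unfold cubic_step. auto_derive; auto. ring. }
  unfold smoothstep. destruct (Rle_dec u 0) as [u_le0 | u_gt0].
  - rewrite clamp01_le0 by lra. rewrite RInt_zero_ext.
    + unfold cubic_step; ring.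
    + rewrite Rmin_right, Rmax_left by lra. intros; apply smoothstep'_le0; lra.
  - destruct (Rle_dec u 1) as [u_le1 | u_gt1].
    + rewrite clamp01_id, on_unit; lra.
    + rewrite clamp01_ge1, <- (RInt_Chasles _ 0 1 u), on_unit
        by (apply ex_RInt_smoothstep' || lra).
      rewrite (RInt_zero_ext _ 1 u).
      * unfold cubic_step, plus; simpl; ring.
      * rewrite Rmin_left, Rmax_right by lra. intros; apply smoothstep'_ge1; lra.
Qed.

Lemma smoothstep_is_derive u : is_derive smoothstep u (smoothstep' u).
Proof.
  apply (is_derive_ext (RInt smoothstep' 0)); [intros; symmetry; apply smoothstep_RInt |].
  apply (is_derive_RInt smoothstep' _ 0); [| apply smoothstep'_continuous].
  apply filter_forall. intros b. apply (RInt_correct smoothstep'), ex_RInt_smoothstep'.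
Qed.

Lemma smoothstep_le0 u : u <= 0 -> smoothstep u = 0.
Proof. intros; unfold smoothstep, cubic_step; rewrite clamp01_le0; lra. Qed.

Lemma smoothstep_ge1 u : 1 <= u -> smoothstep u = 1.
Proof. intros; unfold smoothstep, cubic_step; rewrite clamp01_ge1; lra. Qed.

Lemma smoothstep_bounds u : 0 <= smoothstep u <= 1.
Proof.
  unfold smoothstep, cubic_step. pose proof (clamp01_bounds u). set (x := clamp01 u) in *.
  assert (0 <= x * x) by nra.
  assert (0 <= (1 - x) * (1 - x) * (1 + 2 * x)) by (apply Rmult_le_pos; nra).
  nra.
Qed.

Lemma smoothstep_le u v : u <= v -> smoothstep u <= smoothstep v.
Proof.
  intros uv. unfold smoothstep, cubic_step. pose proof (clamp01_le u v uv).
  pose proof (clamp01_bounds u). pose proof (clamp01_bounds v).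
  set (x := clamp01 u) in *. set (y := clamp01 v) in *.
  assert (0 <= (y - x) * (3 * (x + y) - 2 * (x * x + x * y + y * y)))
    by (apply Rmult_le_pos; nra).
  nra.
Qed.

Lemma lipschitz_of_bounded_local_lipschitz (h : R -> R) (M K e : R) :
  0 < e -> 0 <= K -> (forall x, Rabs (h x) <= M) ->
  (forall x y, Rabs (x - y) < e -> Rabs (h x - h y) <= K * Rabs (x - y)) ->
  forall x y, Rabs (h x - h y) <= (K + 2 * M / e) * Rabs (x - y).
Proof.
  intros e_pos K_nneg h_bounded h_local x y.
  assert (M_nneg : 0 <= M) by (pose proof (h_bounded 0); pose proof (Rabs_pos (h 0)); lra).
  assert (0 <= 2 * M / e) by (apply Rdiv_le_0_compat; lra).
  pose proof (Rabs_pos (x - y)).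
  destruct (Rlt_dec (Rabs (x - y)) e) as [near | far].
  - eapply Rle_trans; [now apply h_local | nra].
  - assert (2 * M <= 2 * M / e * Rabs (x - y)).
    { replace (2 * M) with (2 * M / e * e) at 1 by (field; lra).
      apply Rmult_le_compat_l; lra. }
    pose proof (h_bounded x). pose proof (h_bounded y).
    assert (Rabs (h x - h y) <= Rabs (h x) + Rabs (h y))
      by (rewrite <- (Rabs_Ropp (h y)); apply Rabs_triang).
    nra.
Qed.

Definition periodize (g : R -> R) (x : R) : R := g (x - IZR (Int_part x)).

Lemma Int_part_bounds x : IZR (Int_part x) <= x < IZR (Int_part x) + 1.
Proof. pose proof (base_Int_part x). lra. Qed.

Lemma periodize_periodic g x : periodize g (x + 1) = periodize g x.
Proof.
  unfold periodize. pose proof (Int_part_bounds x).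
  rewrite <- (Int_part_spec (x + 1) (Int_part x + 1)) by (rewrite plus_IZR; lra).
  rewrite plus_IZR. f_equal. ring.
Qed.

Lemma periodize_eq g x : 0 <= x < 1 -> periodize g x = g x.
Proof.
  intros x01. unfold periodize.
  rewrite <- (Int_part_spec x 0) by (simpl; lra). f_equal. simpl. ring.
Qed.

Section Periodize.

Variables (g g' : R -> R) (e : R).
Hypothesis e_pos : 0 < e.
Hypothesis e_le1 : e <= 1.
Hypothesis g_seam : forall t, - e < t < 0 -> g t = g (t + 1).
Hypothesis g_derive : forall t, is_derive g t (g' t).

Lemma periodize_eq_shift (k : Z) y :
  IZR k - e < y < IZR k + 1 -> periodize g y = g (y - IZR k).
Proof.
  intros y_near. unfold periodize. destruct (Rle_dec (IZR k) y).
  - rewrite <- (Int_part_spec y k) by lra. reflexivity.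
  - rewrite <- (Int_part_spec y (k - 1)) by (rewrite minus_IZR; lra).
    rewrite (g_seam (y - IZR k)), minus_IZR by lra. f_equal. ring.
Qed.

Lemma periodize_is_derive (k : Z) y :
  IZR k - e < y < IZR k + 1 -> is_derive (periodize g) y (g' (y - IZR k)).
Proof.
  intros y_near. apply (is_derive_ext_loc (fun y => g (y - IZR k))).
  - assert (window : open (fun y => IZR k - e < y /\ y < IZR k + 1))
      by (apply open_and; [apply open_gt | apply open_lt]).
    eapply filter_imp; [| exact (window y y_near)].
    intros z z_near. symmetry. now apply periodize_eq_shift.
  - rewrite <- (scal_one (g' (y - IZR k))).
    apply (is_derive_comp g); [apply g_derive | auto_derive; [easy | reflexivity]].
Qed.

Lemma Derive_periodize_shift (k : Z) y :
  IZR k - e < y < IZR k + 1 -> Derive (periodize g) y = g' (y - IZR k).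
Proof. intros y_near. now apply is_derive_unique, periodize_is_derive. Qed.

Lemma Derive_periodize y : Derive (periodize g) y = periodize g' y.
Proof. pose proof (Int_part_bounds y). apply Derive_periodize_shift. lra. Qed.

Variables (M K : R).
Hypothesis K_nneg : 0 <= K.
Hypothesis g'_bounded : forall t, Rabs (g' t) <= M.
Hypothesis g'_lipschitz : forall s t, Rabs (g' s - g' t) <= K * Rabs (s - t).

Lemma Derive_periodize_local_lipschitz x y : Rabs (x - y) < e ->
  Rabs (Derive (periodize g) x - Derive (periodize g) y) <= K * Rabs (x - y).
Proof.
  assert (ordered : forall u v, u <= v -> Rabs (u - v) < e ->
    Rabs (Derive (periodize g) u - Derive (periodize g) v) <= K * Rabs (u - v)).
  { intros u v uv near. pose proof (Int_part_bounds v). set (k := Int_part v) in *.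
    rewrite !(Derive_periodize_shift k) by (split_Rabs; lra).
    replace (u - v) with ((u - IZR k) - (v - IZR k)) by ring. apply g'_lipschitz. }
  intros near. destruct (Rle_dec x y).
  - now apply ordered.
  - rewrite Rabs_minus_sym, (Rabs_minus_sym x). apply ordered; [lra | now rewrite Rabs_minus_sym].
Qed.

Lemma periodize_C11 : C11 (periodize g).
Proof.
  assert (lip : forall x y, Rabs (Derive (periodize g) x - Derive (periodize g) y)
                             <= (K + 2 * M / e) * Rabs (x - y)).
  { apply lipschitz_of_bounded_local_lipschitz; auto.
    - intros x. rewrite Derive_periodize. apply g'_bounded.
    - apply Derive_periodize_local_lipschitz. }
  split; [intros x; split |].
  - pose proof (Int_part_bounds x). eexists. apply (periodize_is_derive (Int_part x)). lra.
  - exact (lipschitz_continuous _ _ lip x).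
  - eexists. exact lip.
Qed.

End Periodize.

Definition step_profile (p1 p2 a1 a2 d t : R) : R :=
  p1 + (p2 - p1) * (smoothstep ((t - a1) / d) - smoothstep ((t - a2) / d)).

Definition step_profile' (p1 p2 a1 a2 d t : R) : R :=
  (p2 - p1) / d * (smoothstep' ((t - a1) / d) - smoothstep' ((t - a2) / d)).

Section StepProfile.

Variables (p1 p2 a1 a2 d : R).
Hypothesis d_pos : 0 < d.

Lemma rescale_le0 a t : t <= a -> (t - a) / d <= 0.
Proof. intros. apply Rle_div_l; lra. Qed.

Lemma rescale_ge1 a t : a + d <= t -> 1 <= (t - a) / d.
Proof. intros. apply Rle_div_r; lra. Qed.

Lemma rescale_le_shift a b t : a <= b -> (t - b) / d <= (t - a) / d.
Proof. intros. apply Rmult_le_compat_r; [apply Rlt_le, Rinv_0_lt_compat |]; lra. Qed.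

Lemma step_profile_is_derive t :
  is_derive (step_profile p1 p2 a1 a2 d) t (step_profile' p1 p2 a1 a2 d t).
Proof.
  unfold step_profile, step_profile'. auto_derive.
  - repeat split; eexists; apply smoothstep_is_derive.
  - rewrite !(is_derive_unique _ _ _ (smoothstep_is_derive _)). unfold Rminus, Rdiv. ring.
Qed.

Lemma step_profile'_bounded t :
  Rabs (step_profile' p1 p2 a1 a2 d t) <= Rabs (p2 - p1) / d * 2.
Proof.
  unfold step_profile'.
  rewrite Rabs_mult, (Rabs_div _ _ (Rgt_not_eq _ _ d_pos)), (Rabs_right d) by lra.
  apply Rmult_le_compat_l; [apply Rdiv_le_0_compat; [apply Rabs_pos | lra] |].
  pose proof (smoothstep'_bounds ((t - a1) / d)).
  pose proof (smoothstep'_bounds ((t - a2) / d)).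
  split_Rabs; lra.
Qed.

Lemma step_profile'_lipschitz s t :
  Rabs (step_profile' p1 p2 a1 a2 d s - step_profile' p1 p2 a1 a2 d t)
    <= Rabs (p2 - p1) / d * (12 / d) * Rabs (s - t).
Proof.
  unfold step_profile'. rewrite <- Rmult_minus_distr_l, Rabs_mult, Rmult_assoc.
  rewrite (Rabs_div _ _ (Rgt_not_eq _ _ d_pos)), (Rabs_right d) by lra.
  apply Rmult_le_compat_l; [apply Rdiv_le_0_compat; [apply Rabs_pos | lra] |].
  assert (rescaled : forall a, Rabs ((s - a) / d - (t - a) / d) = Rabs (s - t) / d).
  { intros a. replace ((s - a) / d - (t - a) / d) with ((s - t) / d) by (field; lra).
    rewrite Rabs_div, (Rabs_right d) by lra. reflexivity. }
  pose proof (smoothstep'_lipschitz ((s - a1) / d) ((t - a1) / d)) as lip1.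
  pose proof (smoothstep'_lipschitz ((s - a2) / d) ((t - a2) / d)) as lip2.
  rewrite rescaled in lip1, lip2.
  set (r := Rabs (s - t) / d) in *.
  replace (12 / d * Rabs (s - t)) with (6 * r + 6 * r) by (unfold r; field; lra).
  set (u1 := smoothstep' ((s - a1) / d)) in *. set (v1 := smoothstep' ((t - a1) / d)) in *.
  set (u2 := smoothstep' ((s - a2) / d)) in *. set (v2 := smoothstep' ((t - a2) / d)) in *.
  replace (u1 - u2 - (v1 - v2)) with ((u1 - v1) + - (u2 - v2)) by ring.
  eapply Rle_trans; [apply Rabs_triang |]. rewrite Rabs_Ropp. lra.
Qed.

Hypothesis transitions_disjoint : a1 + d <= a2.

Lemma step_profile_rise t :
  t <= a2 -> step_profile p1 p2 a1 a2 d t = p1 + (p2 - p1) * smoothstep ((t - a1) / d).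
Proof.
  intros. unfold step_profile.
  rewrite (smoothstep_le0 ((t - a2) / d)) by (apply rescale_le0; lra). ring.
Qed.

Lemma step_profile_fall t :
  a1 + d <= t -> step_profile p1 p2 a1 a2 d t = p2 + (p1 - p2) * smoothstep ((t - a2) / d).
Proof.
  intros. unfold step_profile.
  rewrite (smoothstep_ge1 ((t - a1) / d)) by (apply rescale_ge1; lra). ring.
Qed.

Lemma step_profile_left t : t <= a1 -> step_profile p1 p2 a1 a2 d t = p1.
Proof. intros. rewrite step_profile_rise, smoothstep_le0 by (try apply rescale_le0; lra). ring. Qed.

Lemma step_profile_plateau t : a1 + d <= t <= a2 -> step_profile p1 p2 a1 a2 d t = p2.
Proof. intros. rewrite step_profile_rise, smoothstep_ge1 by (try apply rescale_ge1; lra). ring. Qed.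

Lemma step_profile_right t : a2 + d <= t -> step_profile p1 p2 a1 a2 d t = p1.
Proof. intros. rewrite step_profile_fall, smoothstep_ge1 by (try apply rescale_ge1; lra). ring. Qed.

Lemma step_profile_bounds t : p1 <= p2 -> p1 <= step_profile p1 p2 a1 a2 d t <= p2.
Proof.
  intros. unfold step_profile.
  assert (smoothstep ((t - a2) / d) <= smoothstep ((t - a1) / d))
    by (apply smoothstep_le, rescale_le_shift; lra).
  pose proof (smoothstep_bounds ((t - a1) / d)).
  pose proof (smoothstep_bounds ((t - a2) / d)).
  nra.
Qed.

End StepProfile.

Lemma RInt_ext_on (f g : R -> R) a b :
  a <= b -> (forall x, a < x < b -> f x = g x) -> RInt f a b = RInt g a b.
Proof. intros ab fg. apply RInt_ext. rewrite Rmin_left, Rmax_right by lra. exact fg. Qed.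

Lemma RInt_const_on (f : R -> R) c a b :
  a <= b -> (forall x, a < x < b -> f x = c) -> RInt f a b = c * (b - a).
Proof.
  intros ab fc. rewrite (RInt_ext_on f (fun _ => c)), RInt_const by auto. apply Rmult_comm.
Qed.

Lemma RInt_rescale (g : R -> R) c d : 0 < d -> (forall x, continuous g x) ->
  RInt (fun x => g ((x - c) / d)) c (c + d) = d * RInt g 0 1.
Proof.
  intros d_pos g_cont.
  assert (substitution := RInt_comp_lin g (/ d) (- c / d) c (c + d)
    (ex_RInt_continuous g _ _ (fun z _ => g_cont z))).
  replace (/ d * c + - c / d) with 0 in substitution by (field; lra).
  replace (/ d * (c + d) + - c / d) with 1 in substitution by (field; lra).
  rewrite <- substitution, RInt_scal.
  - rewrite (RInt_ext_on (fun y => g (/ d * y + - c / d)) (fun x => g ((x - c) / d)))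
      by (lra || (intros; f_equal; field; lra)).
    change (scal (/ d) ?r) with (/ d * r).
    rewrite <- Rmult_assoc, Rinv_r, Rmult_1_l by lra. reflexivity.
  - apply (ex_RInt_continuous (fun x => g (/ d * x + - c / d))). intros z _.
    apply continuous_comp; [| apply g_cont].
    apply (ex_derive_continuous (fun x => / d * x + - c / d)). auto_derive. easy.
Qed.

Definition transition_integral (h : R -> R) (p q : R) : R :=
  RInt (fun u => h (p + (q - p) * smoothstep u)) 0 1.

Definition transition_defect (h : R -> R) (p1 p2 : R) : R :=
  transition_integral h p1 p2 + transition_integral h p2 p1 - h p1 - h p2.

Section ProfileIntegral.

Variables (h : R -> R) (p1 p2 a1 a2 d : R).
Hypothesis h_continuous : forall x, continuous h x.
Hypothesis d_pos : 0 < d.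
Hypothesis a1_nneg : 0 <= a1.
Hypothesis transitions_disjoint : a1 + d <= a2.
Hypothesis a2_end : a2 + d <= 1.

Lemma transition_continuous p q u :
  continuous (fun u => h (p + (q - p) * smoothstep u)) u.
Proof.
  apply continuous_comp; [| apply h_continuous].
  apply (ex_derive_continuous (fun u => p + (q - p) * smoothstep u)).
  auto_derive. eexists. apply smoothstep_is_derive.
Qed.

Lemma RInt_step_profile :
  RInt (fun t => h (step_profile p1 p2 a1 a2 d t)) 0 1
    = h p1 * (1 - (a2 - a1)) + h p2 * (a2 - a1) + d * transition_defect h p1 p2.
Proof.
  set (f := fun t => h (step_profile p1 p2 a1 a2 d t)).
  assert (f_integrable : forall u v, ex_RInt f u v).
  { intros u v. apply (ex_RInt_continuous f). intros t _.
    apply (continuous_comp (step_profile p1 p2 a1 a2 d) h); [| apply h_continuous].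
    apply (ex_derive_continuous (step_profile p1 p2 a1 a2 d)).
    eexists. now apply step_profile_is_derive. }
  rewrite <- (RInt_Chasles f 0 a1 1), <- (RInt_Chasles f a1 (a1 + d) 1),
    <- (RInt_Chasles f (a1 + d) a2 1), <- (RInt_Chasles f a2 (a2 + d) 1)
    by apply f_integrable.
  set (rise := fun u => h (p1 + (p2 - p1) * smoothstep u)).
  set (fall := fun u => h (p2 + (p1 - p2) * smoothstep u)).
  rewrite (RInt_const_on f (h p1) 0 a1)
    by (lra || (intros; unfold f; rewrite step_profile_left; lra)).
  rewrite (RInt_const_on f (h p2) (a1 + d) a2)
    by (lra || (intros; unfold f; rewrite step_profile_plateau; lra)).
  rewrite (RInt_const_on f (h p1) (a2 + d) 1)
    by (lra || (intros; unfold f; rewrite step_profile_right; lra)).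
  rewrite (RInt_ext_on f (fun t => rise ((t - a1) / d)) a1 (a1 + d))
    by (lra || (intros; unfold f, rise; rewrite step_profile_rise; lra)).
  rewrite (RInt_ext_on f (fun t => fall ((t - a2) / d)) a2 (a2 + d))
    by (lra || (intros; unfold f, fall; rewrite step_profile_fall; lra)).
  rewrite !RInt_rescale by (apply transition_continuous || lra).
  unfold transition_defect, transition_integral. fold rise fall.
  unfold plus; simpl. ring.
Qed.

End ProfileIntegral.

Lemma RInt_comp_periodize (h g : R -> R) :
  RInt (fun x => h (periodize g x)) 0 1 = RInt (fun x => h (g x)) 0 1.
Proof. apply RInt_ext_on; [lra |]. intros. rewrite periodize_eq by lra. reflexivity. Qed.

Lemma balanced_placement (a b L l D : R) :
  a < 0 -> 0 < b -> a * L + b * (1 - L) = 0 -> 0 < l -> l < L -> l < 1 - L ->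
  exists d a1 a2, 0 < d /\ 0 < a1 /\ L - l <= a1 /\ a1 + d <= L /\
    1 - l <= a2 /\ a2 + d < 1 /\ a * (1 - (a2 - a1)) + b * (a2 - a1) + d * D = 0.
Proof.
  intros a_neg b_pos balance l_pos l_L l_1L.
  set (q := Rabs D / (b - a)).
  assert (q_nneg : 0 <= q) by (apply Rdiv_le_0_compat; [apply Rabs_pos | lra]).
  (* This leaves room for the shift delta of the plateau: |delta| = d q < l - d. *)
  set (d := l / (2 * (q + 1))).
  assert (d_pos : 0 < d) by (apply Rdiv_lt_0_compat; lra).
  assert (d_small : d * (q + 1) = l / 2) by (unfold d; field; lra).
  set (delta := d * D / (b - a)).
  assert (delta_small : - (l - d) < delta < l - d).
  { assert (Rabs delta = d * q).
    { unfold delta, q.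
      rewrite !Rabs_div, Rabs_mult, (Rabs_right d), (Rabs_right (b - a)) by lra.
      unfold Rdiv. ring. }
    split_Rabs; nra. }
  exists d, (L - l + (l - d + delta) / 2), (1 - l + (l - d - delta) / 2).
  assert (delta_def : delta * (b - a) = d * D) by (unfold delta; field; lra).
  repeat split; lra.
Qed.

Lemma periodize_step_profile_classC (p1 p2 L l a1 a2 d : R) :
  p1 <= p2 -> 0 < d -> 0 < a1 -> L - l <= a1 -> a1 + d <= L -> L <= 1 - l ->
  1 - l <= a2 -> a2 + d < 1 ->
  classC p1 p2 L l (periodize (step_profile p1 p2 a1 a2 d)).
Proof.
  intros p12 d_pos a1_pos a1_left a1_L L_right a2_right a2_end.
  set (e := Rmin a1 (1 - a2 - d)).
  assert (e_pos : 0 < e) by (apply Rmin_glb_lt; lra).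
  assert (e_bounds : e <= a1 /\ e <= 1 - a2 - d) by (split; [apply Rmin_l | apply Rmin_r]).
  split; [| split; [| split; [| split]]].
  - apply periodize_periodic.
  - apply (periodize_C11 _ (step_profile' p1 p2 a1 a2 d) e)
      with (M := Rabs (p2 - p1) / d * 2) (K := Rabs (p2 - p1) / d * (12 / d)); try lra.
    + intros t t_seam. rewrite step_profile_left, step_profile_right; lra.
    + intros t. apply step_profile_is_derive; lra.
    + apply Rmult_le_pos; apply Rdiv_le_0_compat; (apply Rabs_pos || lra).
    + intros t. apply step_profile'_bounded; lra.
    + intros s t. apply step_profile'_lipschitz; lra.
  - intros x. apply step_profile_bounds; lra.
  - intros x x_left. rewrite periodize_eq, step_profile_left; lra.
  - intros x x_mid. rewrite periodize_eq, step_profile_plateau; lra.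
Qed.

Theorem lemma5p1 (G : R -> R) (p1 p2 l : R) :
  C2 G -> coercive G -> p1 < p2 ->
  Derive G p1 < 0 -> 0 < Derive G p2 ->
  let L := Derive G p2 / (Derive G p2 - Derive G p1) in
  0 < l -> l < Rmin L (1 - L) ->
  exists f : R -> R, classC p1 p2 L l f /\
    RInt (fun x => Derive G (f x)) 0 1 = 0.
Proof.
  intros G_C2 _ p12 G'_p1 G'_p2 L l_pos l_small.
  assert (G'_continuous : forall x, continuous (Derive G) x) by (intros x; apply (proj1 G_C2 x)).
  assert (balance : Derive G p1 * L + Derive G p2 * (1 - L) = 0) by (unfold L; field; lra).
  pose proof (Rmin_l L (1 - L)). pose proof (Rmin_r L (1 - L)).
  destruct (balanced_placement (Derive G p1) (Derive G p2) L l (transition_defect (Derive G) p1 p2))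
    as (d & a1 & a2 & d_pos & a1_pos & a1_left & a1_L & a2_right & a2_end & zero_mean); try lra.
  exists (periodize (step_profile p1 p2 a1 a2 d)). split.
  - apply periodize_step_profile_classC; lra.
  - rewrite RInt_comp_periodize, RInt_step_profile by (assumption || lra). exact zero_mean.
Qed.
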